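(* Let $p$ be a prime and $k$ a positive integer. Then $$\Psi_{p^k}(x)\equiv (x^2+4)^{\varphi(p^k)/2}\pmod p,$$ i.e., the congruence holds coefficientwise in $\mathbb{Z}[x]$ (for $p=2$ and $k=1$ this is to be read as $\Psi_2(x)=x$, the square root of $x^2+4\equiv x^2 \pmod 2$).
   Context: The Fibonacci polynomials are defined by $F_1(x)=1$, $F_2(x)=x$, and $F_n(x)=xF_{n-1}(x)+F_{n-2}(x)$ for $n\geq 3$. For $n\geq 2$, the $n$-th fibotomic polynomial $\Psi_n(x)\in\mathbb{Z}[x]$ is the product of the monic irreducible factors of $F_n(x)$ which are not factors of $F_k(x)$ for any $k<n$; also $\Psi_1(x)=1$. $\varphi$ is Euler's totient function. *)

From HB Require Import structures.
From mathcomp Require Import all_boot all_order all_algebra.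
Set Implicit Arguments. Unset Strict Implicit. Unset Printing Implicit Defensive.
Import Order.TTheory GRing.Theory Num.Theory.
Local Open Scope ring_scope.

Fixpoint fibp (n : nat) : {poly int} :=
  match n with
  | 0%N => 0
  | 1%N => 1
  | (m.+1 as n').+1 => 'X * fibp n' + fibp m
  end.

Definition is_fibotomic (n : nat) (q : {poly int}) : Prop :=
  exists s : seq {poly int},
    [/\ uniq s,
        all (fun r => r \is monic) s,
        (forall r, r \in s -> irreducible_poly r),
        (forall r : {poly int}, r \is monic -> irreducible_poly r ->
           (r \in s <-> (r %| fibp n /\ forall k, (1 <= k < n)%N -> ~~ (r %| fibp k))))
      & q = \prod_(r <- s) r].

Definition poly_congr (m : nat) (a b : {poly int}) : Prop :=
  forall i : nat, (a`_i == b`_i %[mod m%:Z])%Z.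

From HB Require Import structures.
From mathcomp Require Import all_boot all_order all_algebra.
From mathcomp Require Import ring zify.
From Stdlib Require Import Classical.
Set Implicit Arguments. Unset Strict Implicit.
Import Order.TTheory GRing.Theory Num.Theory.
Local Open Scope ring_scope.

(* Write n = p^k and m = p^(k-1).  Since F_m divides F_n we have
   F_n = F_m * G for an integer polynomial G, and the theorem says that G is
   the fibotomic polynomial Psi_n and is congruent to (x^2+4)^(phi(n)/2)
   modulo p (G = x when n = 2).

   Since F_n is
      squarefree and every j < n shares with n a divisor of m, the monic
      irreducible factors of G are exactly the primitive divisors of F_n,
      so G = Psi_n (and Psi_n is unique).
   4. Over F_p: F_(2^j) = x^(2^j-1) in characteristic 2, and for odd p,
      F_(p^j) = (x^2+4)^((p^j-1)/2) by expanding (x + sqrt(x^2+4))^(p^j)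
      with Frobenius.  Dividing the closed forms gives the congruence. *)

Section FibonacciIdentities.
Variable R : comNzRingType.

Definition fibR (n : nat) : {poly R} := map_poly intr (fibp n).

Lemma fibR0 : fibR 0 = 0. Proof. by rewrite /fibR rmorph0. Qed.
Lemma fibR1 : fibR 1 = 1. Proof. by rewrite /fibR rmorph1. Qed.
Lemma fibRSS n : fibR n.+2 = 'X * fibR n.+1 + fibR n.
Proof. by rewrite /fibR /= rmorphD rmorphM /= map_polyX. Qed.

Lemma fibR_add a b : fibR (a + b).+1 = fibR a.+1 * fibR b.+1 + fibR a * fibR b.
Proof.
suff: fibR (a + b).+1 = fibR a.+1 * fibR b.+1 + fibR a * fibR b /\
      fibR (a.+1 + b).+1 = fibR a.+2 * fibR b.+1 + fibR a.+1 * fibR b by case.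
elim: a => [|a [IH1 IH2]].
  by rewrite add0n fibR0 fibR1 fibRSS fibR1 fibR0 fibRSS; split; ring.
split; first exact: IH2.
by rewrite !addSn in IH2 *; rewrite fibRSS IH2 IH1 !fibRSS; ring.
Qed.

(* Cassini's identity; it makes consecutive F_n coprime. *)
Lemma fibR_cassini n :
  fibR n.+1 ^+ 2 - 'X * fibR n * fibR n.+1 - fibR n ^+ 2 = (-1) ^+ n.
Proof.
elim: n => [|n IH]; first by rewrite fibR1 fibR0; ring.
by rewrite fibRSS [in RHS]exprS -IH; ring.
Qed.

Lemma fibR_mul d j : exists g, fibR (d * j) = fibR d * g.
Proof.
case: d => [|d]; first by exists 0; rewrite mul0n fibR0 mul0r.
elim: j => [|j [g Hg]]; first by exists 0; rewrite muln0 fibR0 mulr0.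
exists (fibR (d.+1 * j).+1 + g * fibR d).
by rewrite mulnS addSn fibR_add Hg; ring.
Qed.

Lemma fibR_double n :
  fibR (n.+1 + n.+1) = fibR n.+1 * ('X * fibR n.+1 + fibR n *+ 2).
Proof. by rewrite addnS fibR_add fibRSS; ring. Qed.

(* Derivative identity (x^2+4) F_n' = n (2 F_{n+1} - x F_n) - x F_n, the
   source of the squarefreeness of F_n in characteristic 0. *)
Lemma fibR_deriv n : ('X ^+ 2 + 4%:P) * (fibR n)^`() =
  (fibR n.+1 *+ 2 - 'X * fibR n) *+ n - 'X * fibR n.
Proof.
pose P m := ('X ^+ 2 + 4%:P) * (fibR m)^`() =
  (fibR m.+1 *+ 2 - 'X * fibR m) *+ m - 'X * fibR m.
suff: P n /\ P n.+1 by case.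
elim: n => [|n [IH1 IH2]].
  by rewrite /P !fibRSS fibR1 fibR0 !derivE; split; ring.
split=> //.
have E : ('X ^+ 2 + 4%:P) * (fibR n.+2)^`() = ('X ^+ 2 + 4%:P) * fibR n.+1 +
    'X * (('X ^+ 2 + 4%:P) * (fibR n.+1)^`()) + ('X ^+ 2 + 4%:P) * (fibR n)^`().
  by rewrite fibRSS derivD derivM derivX; ring.
rewrite /P E IH1 IH2 !fibRSS; ring.
Qed.
End FibonacciIdentities.

Section IrreducibleDivisors.
Variable K : fieldType.
Variable r : {poly K}.
Hypothesis r_irr : irreducible_poly r.
Local Notation F := (fibR K).

Lemma irr_dvd_mul a b : r %| a * b -> r %| a \/ r %| b.
Proof.
have [ra|] := boolP (r %| a); first by left.
rewrite -(irreducible_poly_coprime _ r_irr) => co_ra.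
by rewrite (Gauss_dvdpr _ co_ra); right.
Qed.

(* By Cassini's identity r cannot divide two consecutive F_n. *)
Lemma irr_dvd_fib_consecutive n : r %| F n -> r %| F n.+1 -> False.
Proof.
move=> rn rSn.
have r_sign : r %| (-1) ^+ n.
  rewrite -fibR_cassini !expr2.
  by apply: dvdp_sub; [apply: dvdp_sub|];
    [exact: dvdp_mulr | exact: dvdp_mull | exact: dvdp_mulr].
have : r %| (-1) ^+ n * (-1) ^+ n by exact: dvdp_mulr.
have [r_size _] := r_irr.
by rewrite -exprMn mulrNN mulr1 expr1n dvdp1 gtn_eqF.
Qed.

Lemma irr_dvd_fib_sub a b : r %| F (a + b) -> r %| F b -> r %| F a.
Proof.
case: b => [|b]; first by rewrite addn0.
rewrite addnS fibR_add => rab rb.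
rewrite dvdp_addr in rab; last exact: dvdp_mull.
by case: (irr_dvd_mul rab) => // rb'; case: (irr_dvd_fib_consecutive rb' rb).
Qed.

Lemma irr_dvd_fib_mod a b : r %| F a -> r %| F b -> r %| F (a %% b).
Proof.
move=> ra rb; rewrite {1}(divn_eq a b) in ra.
elim: (a %/ b)%N ra => [|c IH] rcb; first by rewrite mul0n add0n in rcb.
by apply: IH; apply: (irr_dvd_fib_sub (b := b)); rewrite // addnAC -mulSnr.
Qed.

Lemma irr_dvd_fib_gcd a b : r %| F a -> r %| F b -> r %| F (gcdn a b).
Proof.
elim: a {-2}a (leqnn a) b => [|N IH] a le_aN b ra rb.
  by move: le_aN; rewrite leqn0 => /eqP ->; rewrite gcd0n.
rewrite gcdnE; case: eqP => [//|/eqP a0].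
apply: IH (irr_dvd_fib_mod rb ra) ra.
by rewrite -ltnS (leq_trans (ltn_pmod _ _) le_aN) ?lt0n.
Qed.

(* In characteristic 0, F_n (n > 0) is squarefree: a square factor r^2 would
   make r divide F_n and F_n', hence F_{n+1} by the derivative identity. *)
Lemma irr_sq_not_dvd_fib n : [pchar K] =i pred0 -> (0 < n)%N -> ~ (r * r %| F n).
Proof.
move=> /pcharf0P char0 n_gt0 /dvdpP [h Fn].
have r_Fn : r %| F n by rewrite Fn mulrA dvdp_mull.
have r_dFn : r %| (F n)^`().
  have -> : (F n)^`() = r * (h^`() * r + h * r^`() *+ 2).
    by rewrite Fn !derivM; ring.
  exact: dvdp_mulr.
have : r %| ('X ^+ 2 + 4%:P) * (F n)^`() by rewrite dvdp_mull.
rewrite fibR_deriv dvdp_subl ?dvdp_mull // -scaler_nat dvdpZr; last first.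
  by rewrite char0 -lt0n.
rewrite dvdp_subl ?dvdp_mull // -scaler_nat dvdpZr ?char0 //.
exact: irr_dvd_fib_consecutive.
Qed.
End IrreducibleDivisors.

Lemma fibR_int n : fibR int n = fibp n.
Proof. by rewrite /fibR map_poly_id // => a _; rewrite intz. Qed.

Lemma fibp_monic n : fibp n.+1 \is monic /\ size (fibp n.+1) = n.+1.
Proof.
pose P m := fibp m.+1 \is monic /\ size (fibp m.+1) = m.+1.
suff: P n /\ P n.+1 by case.
elim: n => [|n [[_ size1] [mon2 size2]]].
  by rewrite /P /= mulr1 addr0 monic1 monicX size_poly1 size_polyX.
split; first by split.
rewrite /P; have -> : fibp n.+3 = fibp n.+2 * 'X + fibp n.+1 by rewrite /= mulrC.
have size_FX : size (fibp n.+2 * 'X) = n.+3 by rewrite size_mulX ?monic_neq0 // size2.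
have lt_size : (size (fibp n.+1) < size (fibp n.+2 * 'X)%R)%N by rewrite size_FX size1.
split; last by rewrite size_polyDl.
by rewrite monicE lead_coefDl // lead_coefMX -monicE.
Qed.

Lemma fibp_dvd d m : (d %| m)%N -> fibp d %| fibp m.
Proof.
move=> /dvdnP [c ->]; have [g Hg] := fibR_mul int d c.
by rewrite mulnC -!fibR_int Hg dvdp_mulIl.
Qed.

(* Irreducible integer polynomials are prime: pass to Q, where Gauss's lemma
   identifies divisibility. *)
Lemma irr_int_dvd_mul (r a b : {poly int}) : irreducible_poly r ->
  r %| a * b -> r %| a \/ r %| b.
Proof.
move=> /irreducible_rat_int r_irr; rewrite -!dvdp_rat_int rmorphM.
exact: irr_dvd_mul.
Qed.

Lemma irr_int_dvd_prod (r : {poly int}) (s : seq {poly int}) :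
  irreducible_poly r -> r %| \prod_(x <- s) x -> exists2 x, x \in s & r %| x.
Proof.
move=> r_irr; elim: s => [|a s IH].
  by rewrite big_nil dvdp1 => /eqP r1; case: r_irr; rewrite r1.
rewrite big_cons => /(irr_int_dvd_mul r_irr) [ra|/IH [x xs rx]].
  by exists a; rewrite ?mem_head.
by exists x; rewrite // in_cons xs orbT.
Qed.

Lemma mem_monic_irr_factors (s : seq {poly int}) (r : {poly int}) :
  all (fun x => x \is monic) s -> (forall x, x \in s -> irreducible_poly x) ->
  r \is monic -> irreducible_poly r -> (r \in s <-> r %| \prod_(x <- s) x).
Proof.
move=> s_monic s_irr r_monic r_irr; split.
  by move=> rs; rewrite (big_rem _ rs) /= dvdp_mulIl.
move=> /(irr_int_dvd_prod r_irr) [x xs rx].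
have [r_size _] := r_irr.
have : r %= x.
  by case: (s_irr x xs) => _; apply; rewrite // gtn_eqF.
by rewrite eqp_monic // ?(allP s_monic) // => /eqP ->.
Qed.

Lemma not_uniq_sq_dvd_prod (s : seq {poly int}) : ~~ uniq s ->
  exists2 r, r \in s & r * r %| \prod_(x <- s) x.
Proof.
elim: s => [|a s IH] //=; rewrite negb_and negbK => /orP [as_|/IH [r rs rr]].
  exists a; first exact: mem_head.
  by rewrite big_cons dvdp_mul // (big_rem _ as_) /= dvdp_mulIl.
by exists r; rewrite ?in_cons ?rs ?orbT // big_cons dvdp_mull.
Qed.

Lemma fibp_squarefree n (r : {poly int}) : (0 < n)%N -> irreducible_poly r ->
  ~ (r * r %| fibp n).
Proof.
move=> n_gt0 /irreducible_rat_int r_irr; rewrite -dvdp_rat_int rmorphM.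
exact: (irr_sq_not_dvd_fib r_irr (pchar_num _)).
Qed.

Local Notation toQ := (map_poly (intr : int -> rat)).

(* A reducible monic integer polynomial is a product of two monic integer
   polynomials of smaller degree (Gauss's lemma, via dvdpP_rat_int). *)
Lemma monic_reducible_split (G : {poly int}) :
  G \is monic -> (1 < size G)%N -> ~ irreducible_poly G ->
  exists g h, [/\ g \is monic, h \is monic, (size g < size G)%N,
                  (size h < size G)%N & G = g * h].
Proof.
move=> G_monic G_size G_red.
have [q [q_size qG q_nG]] :
    exists q : {poly int}, [/\ size q != 1, q %| G & ~~ (q %= G)].
  apply: NNPP => no_q; apply: G_red; split=> // q q_size qG.
  by apply/negPn/negP => q_nG; apply: no_q; exists q.
have G_neq0 : G != 0 by exact: monic_neq0.
have qG_Q : toQ q %| toQ G by rewrite dvdp_rat_int.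
have [g0 [a a_neq0 qE] [h0 GE]] := dvdpP_rat_int qG_Q.
have g0_neq0 : g0 != 0 by apply: contra_neq G_neq0; rewrite GE => ->; rewrite mul0r.
have h0_neq0 : h0 != 0 by apply: contra_neq G_neq0; rewrite GE => ->; rewrite mulr0.
have size_g0 : size g0 = size q.
  by rewrite -(size_rat_int_poly q) qE size_scale // size_rat_int_poly.
have size_G : size G = (size g0 + size h0).-1 by rewrite GE size_mul.
have h0_size : (1 < size h0)%N.
  rewrite ltnNge; apply: contra q_nG => h0_size.
  have /size_poly1P [c c_neq0 h0E] : size h0 == 1%N.
    by rewrite eqn_leq h0_size lt0n size_poly_eq0.
  rewrite /eqp -!dvdp_rat_int qE GE h0E rmorphM /= map_polyC /= mulrC mul_polyC.
  by rewrite !dvdpZl ?dvdpZr ?dvdpp ?intr_eq0.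
have g0_size : (1 < size g0)%N.
  by rewrite ltn_neqAle eq_sym size_g0 q_size lt0n -size_g0 size_poly_eq0.
have lead_prod : lead_coef g0 * lead_coef h0 = 1.
  by rewrite -lead_coefM -GE; apply/monicP.
have lg0_neq0 : lead_coef g0 != 0 by rewrite lead_coef_eq0.
have lh0_neq0 : lead_coef h0 != 0 by rewrite lead_coef_eq0.
exists (lead_coef h0 *: g0), (lead_coef g0 *: h0); split.
- by apply/monicP; rewrite lead_coefZ mulrC.
- by apply/monicP; rewrite lead_coefZ.
- rewrite size_scale // size_G; move: h0_size.
  by case: (size h0) => [|[|n]] // _; rewrite !addnS ltnS leq_addr.
- rewrite size_scale // size_G; move: g0_size.
  by case: (size g0) => [|[|n]] // _; rewrite !addSn ltnS leq_addl.
by rewrite -scalerAl -scalerAr scalerA mulrC lead_prod scale1r.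
Qed.

Lemma monic_irr_factorization (G : {poly int}) : G \is monic ->
  exists s : seq {poly int}, [/\ all (fun x => x \is monic) s,
    (forall x, x \in s -> irreducible_poly x) & G = \prod_(x <- s) x].
Proof.
elim: {G}(size G) {-2}G (leqnn (size G)) => [|N IH] G le_GN G_monic.
  by move: le_GN; rewrite leqn0 size_poly_eq0 (negPf (monic_neq0 G_monic)).
have [G_size|G_size] := leqP (size G) 1.
  exists [::]; rewrite big_nil; split => //.
  have /size_poly1P [c _ GE] : size G == 1%N.
    by rewrite eqn_leq G_size lt0n size_poly_eq0 monic_neq0.
  by move: G_monic; rewrite GE monicE lead_coefC => /eqP ->.
have [G_irr|G_red] := classic (irreducible_poly G).
  by exists [:: G]; rewrite big_seq1 /= G_monic; split=> // x /[!inE] /eqP ->.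
have [g [h [g_monic h_monic g_size h_size GE]]] :=
  monic_reducible_split G_monic G_size G_red.
have [sg [sg_monic sg_irr gE]] := IH g (leq_trans g_size le_GN) g_monic.
have [sh [sh_monic sh_irr hE]] := IH h (leq_trans h_size le_GN) h_monic.
exists (sg ++ sh); split.
- by rewrite all_cat sg_monic sh_monic.
- by move=> x /[!mem_cat] /orP [/sg_irr|/sh_irr].
by rewrite big_cat GE gE hE.
Qed.

(* The fibotomic polynomial is unique: both lists consist exactly of the
   monic irreducibles with the defining divisibility property. *)
Lemma is_fibotomic_unique n q1 q2 :
  is_fibotomic n q1 -> is_fibotomic n q2 -> q1 = q2.
Proof.
move=> [s1 [uniq1 monic1 irr1 spec1 ->]] [s2 [uniq2 monic2 irr2 spec2 ->]].
apply: perm_big; apply: uniq_perm => // x; apply/idP/idP => xs.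
  have [x_monic x_irr] := (allP monic1 x xs, irr1 x xs).
  by apply/spec2 => //; apply/spec1.
have [x_monic x_irr] := (allP monic2 x xs, irr2 x xs).
by apply/spec1 => //; apply/spec2.
Qed.

(* For 0 < j < p^k, gcd(j, p^k) is a proper divisor of p^k, so it divides
   p^(k-1). *)
Lemma gcdn_prime_power p k j : prime p -> (0 < k)%N -> (0 < j < p ^ k)%N ->
  (gcdn j (p ^ k) %| p ^ k.-1)%N.
Proof.
move=> p_prime k_gt0 /andP [j_gt0 j_lt].
have /(dvdn_pfactor _ _ p_prime) [i le_ik gE] := dvdn_gcdr j (p ^ k).
have g_le_j : (gcdn j (p ^ k) <= j)%N by rewrite dvdn_leq // dvdn_gcdl.
rewrite gE dvdn_exp2l //.
have : i != k by apply: contraTneq g_le_j => ik; rewrite gE ik -ltnNge.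
by lia.
Qed.

Section PrimePowerIndex.
Variables (p k : nat) (G : {poly int}).
Hypotheses (p_prime : prime p) (k_gt0 : (0 < k)%N).
Hypothesis fib_pk : fibp (p ^ k) = fibp (p ^ k.-1) * G.

(* An irreducible r divides the quotient G = F_{p^k} / F_{p^(k-1)} iff r
   divides F_{p^k} but no earlier F_j: F_{p^k} is squarefree, and any
   common divisor of F_{p^k} and F_j (j < p^k) divides F_{p^(k-1)}. *)
Lemma primitive_divisor_pk (r : {poly int}) : irreducible_poly r ->
  r %| G <-> r %| fibp (p ^ k) /\ forall j, (1 <= j < p ^ k)%N -> ~~ (r %| fibp j).
Proof.
move=> r_irr.
have pk_gt0 : (0 < p ^ k)%N by rewrite expn_gt0 prime_gt0.
have m_gt0 : (0 < p ^ k.-1)%N by rewrite expn_gt0 prime_gt0.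
have m_lt : (p ^ k.-1 < p ^ k)%N by rewrite ltn_exp2l ?prime_gt1 //; lia.
split=> [rG|[r_pk r_prim]].
  split; first by rewrite fib_pk dvdp_mull.
  move=> j /andP [j_gt0 j_lt]; apply/negP => rj.
  have rQ_irr := iffRL (irreducible_rat_int r) r_irr.
  have r_gcd : map_poly intr r %| fibR rat (gcdn j (p ^ k)).
    by apply: irr_dvd_fib_gcd; rewrite // dvdp_rat_int // fib_pk dvdp_mull.
  have r_m : r %| fibp (p ^ k.-1).
    rewrite -dvdp_rat_int (dvdp_trans r_gcd) // dvdp_rat_int fibp_dvd //.
    by rewrite gcdn_prime_power ?j_gt0.
  by apply: (fibp_squarefree pk_gt0 r_irr); rewrite fib_pk dvdp_mul.
move: r_pk; rewrite fib_pk => /(irr_int_dvd_mul r_irr) [r_m|//].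
by have := r_prim (p ^ k.-1)%N; rewrite m_gt0 m_lt r_m => /(_ isT).
Qed.

Lemma fibotomic_prime_power : is_fibotomic (p ^ k) G.
Proof.
have G_monic : G \is monic.
  have [m_monic _] := fibp_monic (p ^ k.-1).-1.
  have [pk_monic _] := fibp_monic (p ^ k).-1.
  rewrite prednK ?expn_gt0 ?prime_gt0 // in m_monic.
  rewrite prednK ?expn_gt0 ?prime_gt0 // fib_pk in pk_monic.
  by rewrite monicMl in pk_monic.
have [s [s_monic s_irr GE]] := monic_irr_factorization G_monic.
exists s; split=> //.
- apply/negPn/negP => /not_uniq_sq_dvd_prod [r rs rr].
  have pk_gt0 : (0 < p ^ k)%N by rewrite expn_gt0 prime_gt0.
  apply: (fibp_squarefree pk_gt0 (s_irr r rs)).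
  by rewrite fib_pk dvdp_mull // GE.
- move=> r r_monic r_irr.
  by rewrite -primitive_divisor_pk // GE; apply: mem_monic_irr_factors.
Qed.
End PrimePowerIndex.

Lemma poly_congr_map p (G H : {poly int}) : prime p ->
  map_poly intr G = map_poly intr H :> {poly 'F_p} -> poly_congr p G H.
Proof.
move=> p_prime GH i; rewrite eqz_mod_dvd (dvdz_pcharf (pchar_Fp p_prime)).
by rewrite rmorphB /= subr_eq0 -!coef_map GH.
Qed.

Lemma frobenius_powD (R : comNzRingType) p (x y : R) j : p \in [pchar R] ->
  (x + y) ^+ (p ^ j) = x ^+ (p ^ j) + y ^+ (p ^ j).
Proof.
move=> pR; apply: exprDn_pchar.
by rewrite pnatX (pnatE _ (pcharf_prime pR)) pR.
Qed.

(* In characteristic 2, F_{2^j} = x^(2^j - 1) by the doubling formula. *)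
Lemma fibR_pchar2_pow (R : comNzRingType) j : 2%N \in [pchar R] ->
  fibR R (2 ^ j) = 'X ^+ (2 ^ j).-1.
Proof.
move=> pR2; elim: j => [|j IH]; first by rewrite expn0 fibR1 expr0.
have pow_gt0 : (0 < 2 ^ j)%N by rewrite expn_gt0.
have -> : (2 ^ j.+1 = (2 ^ j).-1.+1 + (2 ^ j).-1.+1)%N by rewrite expnS; lia.
have two_eq0 : fibR R (2 ^ j).-1 *+ 2 = 0.
  by rewrite -mulr_natr -polyC_natr (pcharf0 pR2) mulr0.
rewrite fibR_double two_eq0 addr0 prednK // IH -exprS -exprD.
by congr (_ ^+ _); lia.
Qed.

Lemma linear_rem_unique (S : nzRingType) (D Q1 Q2 : {poly S}) (a b c d : S) :
  D \is monic -> (2 < size D)%N ->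
  Q1 * D + (a%:P * 'X + b%:P) = Q2 * D + (c%:P * 'X + d%:P) -> a = c /\ b = d.
Proof.
move=> D_monic D_size E.
have small (a' b' : S) : (size (a'%:P * 'X + b'%:P)%R < size D)%N.
  rewrite size_MXaddC; case: ifP => _; apply: leq_trans D_size => //.
  by rewrite !ltnS size_polyC_leq1.
have := congr1 (fun P => Pdiv.CommonRing.rmodp P D) E.
rewrite /= !Pdiv.RingMonic.rmodp_addl_mul_small // => E'.
have := congr1 (fun P : {poly S} => P`_1) E'.
have := congr1 (fun P : {poly S} => P`_0) E'.
by rewrite /= !coefD !coefMX !coefC /= !add0r !addr0.
Qed.

(* 2^(p^j - 1) = 1 in odd characteristic p, as 2 is invertible and fixed
   by Frobenius. *)
Lemma two_pow_pchar (S : comNzRingType) p j : p \in [pchar S] -> odd p ->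
  (2 ^ (p ^ j).-1)%:R = 1 :> S.
Proof.
move=> pS p_odd.
have two_inv : 2%:R * ((p.+1)./2)%:R = 1 :> S.
  have half_p1 : (2 * (p.+1)./2 = p.+1)%N.
    by rewrite mul2n -[RHS]odd_double_half /= p_odd.
  by rewrite -natrM half_p1 -addn1 natrD (pcharf0 pS) add0r.
have two_frob : 2%:R ^+ (p ^ j) = 2%:R :> S.
  by rewrite -(addn1 1) natrD frobenius_powD // expr1n.
have q_gt0 : (0 < p ^ j)%N by rewrite expn_gt0 prime_gt0 // (pcharf_prime pS).
rewrite -[LHS]mulr1 -[X in _ * X]two_inv mulrA natrX -exprSr prednK //.
by rewrite two_frob.
Qed.

(* Odd characteristic p: with Y a square root of w = x^2 + 4 (computing in
   R[x][Y] modulo Y^2 - w), (x + Y)^n = 2^(n-1) (L_n + F_n Y).  Comparing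
   with Frobenius, (x + Y)^(p^j) = x^(p^j) + w^((p^j-1)/2) Y, gives
   F_{p^j} = w^((p^j-1)/2). *)
Section OddCharacteristic.
Variables (R : comNzRingType) (p : nat).
Hypotheses (pR : p \in [pchar R]) (p_odd : odd p).

Local Notation F := (fibR R).
Let w : {poly R} := 'X ^+ 2 + 4%:P.
Let D : {poly {poly R}} := 'X ^+ 2 - w%:P.
Let u : {poly {poly R}} := ('X : {poly R})%:P + 'X.

Lemma lucas_power n : exists Q, u ^+ n.+1 = Q * D +
  (((2 ^ n)%:R * F n.+1)%:P * 'X + ((2 ^ n)%:R * ('X * F n.+1 + F n *+ 2))%:P).
Proof.
elim: n => [|n [Q HQ]].
  by exists 0; rewrite fibR1 fibR0 /u; ring.
exists (Q * u + ((2 ^ n)%:R * F n.+1)%:P).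
rewrite exprS HQ !fibRSS expnS /u /D /w.
by rewrite !(rmorphD, rmorphM, rmorphMn, natrM) /= !polyC1; ring.
Qed.

Lemma sqrt_odd_power j : exists Q, 'X ^+ (j.*2).+1 = Q * D + (w ^+ j)%:P * 'X.
Proof.
elim: j => [|j [Q HQ]]; first by exists 0; rewrite mul0r add0r expr0 polyC1 mul1r.
exists (Q * D + (w ^+ j)%:P * 'X + Q * w%:P).
have -> : 'X ^+ (j.+1).*2.+1 = 'X ^+ 2 * 'X ^+ (j.*2).+1 :> {poly {poly R}}.
  by rewrite -exprD doubleS.
by rewrite HQ /D [w ^+ j.+1]exprS rmorphM /=; ring.
Qed.

(* Compare the coefficients of Y in the two expansions of (x + Y)^(p^j). *)
Lemma fibR_pchar_odd_pow j : F (p ^ j) = w ^+ (p ^ j)./2.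
Proof.
set q := (p ^ j)%N.
have q_gt0 : (0 < q)%N by rewrite expn_gt0 prime_gt0 // (pcharf_prime pR).
have qE : q = (q./2.*2).+1 by rewrite -[LHS](odd_double_half q) oddX p_odd orbT.
have [Q HQ] := lucas_power q.-1; rewrite prednK // in HQ.
have [Q' HQ'] := sqrt_odd_power q./2; rewrite -qE in HQ'.
have pRY : p \in [pchar {poly {poly R}}] by rewrite !pchar_poly.
have frob : Q * D + (((2 ^ q.-1)%:R * F q)%:P * 'X
      + ((2 ^ q.-1)%:R * ('X * F q + F q.-1 *+ 2))%:P)
    = Q' * D + ((w ^+ q./2)%:P * 'X + ('X ^+ q)%:P).
  rewrite -HQ /u frobenius_powD // -/q HQ' -rmorphXn addrCA.
  by congr (_ + _); apply: addrC.
have D_monic : D \is monic by rewrite monicXnsubC.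
have D_size : (2 < size D)%N by rewrite size_XnsubC.
have [Fq_eq _] := linear_rem_unique D_monic D_size frob.
by rewrite -Fq_eq two_pow_pchar ?pchar_poly // mul1r.
Qed.
End OddCharacteristic.

Lemma fibotomic_quotient_mod_p p k (G : {poly int}) : prime p -> (0 < k)%N ->
  fibp (p ^ k) = fibp (p ^ k.-1) * G -> ~~ ((p == 2%N) && (k == 1%N)) ->
  map_poly intr G = ('X ^+ 2 + 4%:P) ^+ (totient (p ^ k) %/ 2) :> {poly 'F_p}.
Proof.
move=> p_prime k_gt0 fib_pk not_2_1.
have pFp := pchar_Fp p_prime.
have pkE : (p ^ k = p ^ k.-1 * p)%N by rewrite -expnSr prednK.
have fib_pk_Fp : fibR 'F_p (p ^ k) = fibR 'F_p (p ^ k.-1) * map_poly intr G.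
  by rewrite /fibR fib_pk rmorphM.
rewrite totient_pfactor //.
have [p2|p_odd] := even_prime p_prime.
  (* p = 2: F_{2^k} = x^(2^k-1) and x^2 + 4 = x^2. *)
  subst p; have k_gt1 : (1 < k)%N by move: not_2_1; rewrite eqxx /=; lia.
  rewrite !fibR_pchar2_pow // in fib_pk_Fp.
  have -> : (4 : 'F_2) = 0 by apply/val_inj.
  have half : ((2.-1 * 2 ^ k.-1) %/ 2 = 2 ^ k.-2)%N.
    have -> : k.-1 = k.-2.+1 by lia.
    by rewrite mul1n expnS mulKn.
  rewrite polyC0 addr0 -exprM half -expnS prednK; last by lia.
  apply: (@mulfI _ ('X ^+ (2 ^ k.-1).-1)); first by rewrite expf_neq0 ?polyX_eq0.
  rewrite -fib_pk_Fp -exprD pkE; congr (_ ^+ _).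
  have : (0 < 2 ^ k.-1)%N by rewrite expn_gt0.
  lia.
(* p odd: F_{p^j} = w^((p^j-1)/2), and (m p - 1)/2 = (m - 1)/2 + (p-1) m/2. *)
rewrite !(fibR_pchar_odd_pow pFp p_odd) in fib_pk_Fp.
set m := (p ^ k.-1)%N in pkE fib_pk_Fp *.
have half : ((m * p)./2 = m./2 + (p.-1 * m) %/ 2)%N.
  rewrite -[in LHS](prednK (prime_gt0 p_prime)) mulnS [in LHS]mulnC -!divn2.
  by rewrite divnDr // dvdn_mulr // -(odd_halfK p_odd) -muln2 dvdn_mull.
rewrite pkE half exprD in fib_pk_Fp.
apply: (@mulfI _ (('X ^+ 2 + 4%:P) ^+ m./2)); last by rewrite -fib_pk_Fp.
by rewrite expf_neq0 // monic_neq0 // monicXnaddC.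
Qed.

Unset Implicit Arguments.
Theorem mainTheorem11 (p k : nat) (hp : prime p) (hk : (0 < k)%N) :
  (exists q, is_fibotomic (p ^ k) q) /\
  (forall q, is_fibotomic (p ^ k) q ->
     if (p == 2%N) && (k == 1%N) then q = 'X
     else poly_congr p q (('X ^+ 2 + 4%:P) ^+ (totient (p ^ k) %/ 2))).
Proof.
have [G fib_pk] : exists G, fibp (p ^ k) = fibp (p ^ k.-1) * G.
  have [G] := fibR_mul int (p ^ k.-1) p.
  by rewrite -expnSr prednK // !fibR_int; exists G.
have G_fibotomic := fibotomic_prime_power hp hk fib_pk.
split=> [|q /(is_fibotomic_unique G_fibotomic) <-]; first by exists G.
case: ifP => [/andP [/eqP p2 /eqP k1]|not_2_1].
  by move: fib_pk; rewrite p2 k1 /= mul1r addr0 mulr1.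
apply: poly_congr_map => //.
rewrite (fibotomic_quotient_mod_p hp hk fib_pk) ?not_2_1 // rmorphXn.
by congr (_ ^+ _); rewrite [RHS]rmorphD /= map_polyXn map_polyC.
Qed.
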